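(* Let $n\ge 2$. The number $\eta_n$ of all unordered pairs of disjoint $n^2\times n^2$ S-permutation matrices equals $$\eta_n=\frac{(n!)^{2n}}{2}\,\xi_n,\qquad\text{where}\qquad \xi_n=\sum_{\overline{A}\in\overline{\mathfrak{B}}_n,\ \varepsilon(\overline{A})\ge 2}(-1)^{\varepsilon(\overline{A})}\,|\overline{A}|\prod_{i=0}^{n-2}\left[(n-i)!\right]^{\psi_i(\overline{A})}.$$
   Context: An $n^2\times n^2$ S-permutation matrix is an $n^2\times n^2$ binary matrix which, when partitioned into $n^2$ non-intersecting consecutive $n\times n$ blocks, contains exactly one $1$ in each row, each column and each block. Two binary matrices $(a_{ij}),(b_{ij})$ of equal size are disjoint if there are no $i,j$ with $a_{ij}=b_{ij}=1$. $\mathfrak{B}_n$ is the set of $n\times n$ binary matrices. For $A\in\mathfrak{B}_n$, $r_k(A)$ (resp. $c_k(A)$) is the number of rows (resp. columns) of $A$ with exactly $k$ ones, $\psi_k(A)=r_k(A)+c_k(A)$, and $\varepsilon(A)$ is the total number of ones of $A$. $A\sim B$ iff $B$ is obtained from $A$ by permuting rows; $\overline{A}$ is the equivalence class of $A$, $|\overline{A}|$ its cardinality, $\overline{\mathfrak{B}}_n=\mathfrak{B}_n/\!\sim$; $\psi_k,\varepsilon$ are defined on classes via any representative. *)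

From mathcomp Require Import all_boot all_order all_algebra all_fingroup.
Set Implicit Arguments. Unset Strict Implicit. Unset Printing Implicit Defensive.
Import GRing.Theory Num.Theory.

Definition is_Sperm (n : nat) (A : 'M[bool]_(n ^ 2)) : bool :=
  [&& [forall i, #|[set j | A i j]| == 1],
      [forall j, #|[set i | A i j]| == 1] &
      [forall p : 'I_n, forall q : 'I_n,
         #|[set ij : 'I_(n ^ 2) * 'I_(n ^ 2) |
              [&& ij.1 %/ n == p, ij.2 %/ n == q & A ij.1 ij.2]]| == 1]].

Definition disjoint_mx (m : nat) (A B : 'M[bool]_m) : bool :=
  [forall i, forall j, ~~ (A i j && B i j)].

Definition Sperms (n : nat) : {set 'M[bool]_(n ^ 2)} := [set A | is_Sperm A].

Definition eta (n : nat) : nat :=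
  #|[set [set A; B] | A in Sperms n, B in Sperms n & disjoint_mx A B]|.

Definition rk (n k : nat) (A : 'M[bool]_n) : nat :=
  #|[set i | #|[set j | A i j]| == k]|.
Definition ck (n k : nat) (A : 'M[bool]_n) : nat :=
  #|[set j | #|[set i | A i j]| == k]|.
Definition psi (n k : nat) (A : 'M[bool]_n) : nat := rk k A + ck k A.
Definition eps (n : nat) (A : 'M[bool]_n) : nat :=
  #|[set ij : 'I_n * 'I_n | A ij.1 ij.2]|.

Definition row_equiv (n : nat) (A B : 'M[bool]_n) : Prop :=
  exists s : 'S_n, B = row_perm s A.
Definition row_equivb (n : nat) (A B : 'M[bool]_n) : bool :=
  [exists s : 'S_n, B == row_perm s A].

Definition cls (n : nat) (A : 'M[bool]_n) : {set 'M[bool]_n} :=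
  [set B | row_equivb A B].
Definition classes (n : nat) : {set {set 'M[bool]_n}} :=
  [set cls A | A : 'M[bool]_n].

Definition psiC (n k : nat) (C : {set 'M[bool]_n}) : nat :=
  if [pick A in C] is Some A then psi k A else 0.
Definition epsC (n : nat) (C : {set 'M[bool]_n}) : nat :=
  if [pick A in C] is Some A then eps A else 0.

Local Open Scope ring_scope.

Definition xi (n : nat) : int :=
  \sum_(C in classes n | (2 <= epsC C)%N)
     (-1) ^+ epsC C * (#|C|%:Z) *
     (\prod_(0 <= i < n.-1) (((n - i)`! ^ psiC i C)%N)%:Z).

From mathcomp Require Import all_boot all_order all_algebra all_fingroup.
From mathcomp Require Import zify ring.
Import GRing.Theory Num.Theory.
Set Implicit Arguments. Unset Strict Implicit. Unset Printing Implicit Defensive.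

(* An S-permutation matrix is determined by the position of its one inside
   each block (p, q): the row and column conditions say exactly that, for
   each p, the local rows chosen in the blocks (p, _) form a permutation of
   'I_n, and for each q the local columns chosen in the blocks (_, q) do.
   Hence S-permutation matrices are pairs of n-tuples of permutations, and
   there are (n!)^(2n) of them.  Two of them meet iff they make the same
   choice in some block, so by inclusion-exclusion over the set S of blocks
   where they agree, the number of matrices disjoint from a fixed one is
   sum_S (-1)^|S| prod_p (n - r_p(S))! prod_q (n - c_q(S))!, independently
   of the fixed one.  Read as a binary n x n matrix, the weight of S is
   prod_i ((n - i)!)^(psi_i S); the terms with |S| <= 1 cancel, and the
   others are invariant under row permutations, which groups them into
   xi_n.  Dividing by 2 passes from ordered to unordered pairs. *)

Section BlockCoordinates.
Variable n : nat.

Lemma ord_hi_subproof (i : 'I_(n ^ 2)) : i %/ n < n.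
Proof. by case: n i => [[]//|m] i; rewrite ltn_divLR // -expnSr ltn_ord. Qed.

Lemma ord_lo_subproof (i : 'I_(n ^ 2)) : i %% n < n.
Proof. by case: n i => [[]//|m] i; rewrite ltn_mod. Qed.

Lemma ord_hilo_subproof (p a : 'I_n) : p * n + a < n ^ 2.
Proof. by have := ltn_ord p; have := ltn_ord a; rewrite expnS expn1; nia. Qed.

Definition ord_hi (i : 'I_(n ^ 2)) : 'I_n := Ordinal (ord_hi_subproof i).
Definition ord_lo (i : 'I_(n ^ 2)) : 'I_n := Ordinal (ord_lo_subproof i).
Definition ord_hilo (p a : 'I_n) : 'I_(n ^ 2) := Ordinal (ord_hilo_subproof p a).

Lemma ord_hiK (p a : 'I_n) : ord_hi (ord_hilo p a) = p.
Proof.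
have n_gt0 : 0 < n by apply: leq_ltn_trans (ltn_ord p).
by apply: val_inj; rewrite /= divnMDl // divn_small ?addn0.
Qed.

Lemma ord_loK (p a : 'I_n) : ord_lo (ord_hilo p a) = a.
Proof. by apply: val_inj; rewrite /= modnMDl modn_small. Qed.

Lemma ord_hiloK (i : 'I_(n ^ 2)) : ord_hilo (ord_hi i) (ord_lo i) = i.
Proof. by apply: val_inj; rewrite /= -divn_eq. Qed.

Lemma eq_ord_hilo (i : 'I_(n ^ 2)) p a :
  (i == ord_hilo p a) = (ord_hi i == p) && (ord_lo i == a).
Proof.
apply/eqP/andP => [->|[/eqP <- /eqP <-]]; last by rewrite ord_hiloK.
by rewrite ord_hiK ord_loK.
Qed.

End BlockCoordinates.

Definition perm_fam n := {ffun 'I_n -> {perm 'I_n}}.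

(* The one of block [(p, q)] sits in its local row [x.1 p q] and local column [x.2 q p]. *)
Definition Sperm_of n (x : perm_fam n * perm_fam n) : 'M[bool]_(n ^ 2) :=
  \matrix_(i, j) ((x.1 (ord_hi i) (ord_hi j) == ord_lo i) &&
                  (x.2 (ord_hi j) (ord_hi i) == ord_lo j)).

Lemma Sperm_ofE n (x : perm_fam n * perm_fam n) i j :
  Sperm_of x i j = (x.1 (ord_hi i) (ord_hi j) == ord_lo i) &&
                   (x.2 (ord_hi j) (ord_hi i) == ord_lo j).
Proof. by rewrite mxE. Qed.

Lemma Sperm_of_hilo n (x : perm_fam n * perm_fam n) p q a b :
  Sperm_of x (ord_hilo p a) (ord_hilo q b) = (x.1 p q == a) && (x.2 q p == b).
Proof. by rewrite Sperm_ofE !ord_hiK !ord_loK. Qed.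

Lemma Sperm_of_is_Sperm n (x : perm_fam n * perm_fam n) : is_Sperm (Sperm_of x).
Proof.
apply/and3P; split.
- apply/forallP => i; apply/cards1P.
  pose q := (x.1 (ord_hi i))^-1%g (ord_lo i).
  exists (ord_hilo q (x.2 q (ord_hi i))); apply/setP => j.
  rewrite !inE Sperm_ofE eq_ord_hilo.
  apply/andP/andP => [[/eqP e1 /eqP e2]|[/eqP e1 /eqP e2]].
    have hj : ord_hi j = q by rewrite /q -e1 permK.
    by rewrite hj in e2 *; rewrite e2.
  by rewrite e1 e2 /q permKV !eqxx.
- apply/forallP => j; apply/cards1P.
  pose p := (x.2 (ord_hi j))^-1%g (ord_lo j).
  exists (ord_hilo p (x.1 p (ord_hi j))); apply/setP => i.
  rewrite !inE Sperm_ofE eq_ord_hilo.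
  apply/andP/andP => [[/eqP e1 /eqP e2]|[/eqP e1 /eqP e2]].
    have hi : ord_hi i = p by rewrite /p -e2 permK.
    by rewrite hi in e1 *; rewrite e1.
  by rewrite e1 e2 /p permKV !eqxx.
- apply/forallP => p; apply/forallP => q; apply/cards1P.
  exists (ord_hilo p (x.1 p q), ord_hilo q (x.2 q p)); apply/setP => -[i j].
  rewrite !inE /= Sperm_ofE xpair_eqE !eq_ord_hilo.
  rewrite -[i %/ n == p]/(ord_hi i == p) -[j %/ n == q]/(ord_hi j == q).
  by case: eqP => [->|]; case: eqP => [->|]; rewrite ?andbF //=
    [_ == ord_lo i]eq_sym [_ == ord_lo j]eq_sym.
Qed.

Lemma Sperm_of_inj n : injective (@Sperm_of n).
Proof.
move=> x y exy.
have agree p q : (y.1 p q == x.1 p q) && (y.2 q p == x.2 q p).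
  have := Sperm_of_hilo x p q (x.1 p q) (x.2 q p).
  by rewrite exy Sperm_of_hilo !eqxx.
case: x y exy agree => [f g] [f' g'] _ /= agree.
congr pair; apply/ffunP => p; apply/permP => q.
  by have /andP[/eqP] := agree p q.
by have /andP[_ /eqP] := agree q p.
Qed.

Section SpermDecoding.
Variables (n : nat) (A : 'M[bool]_(n ^ 2)).
Hypothesis SpermA : is_Sperm A.

Lemma Sperm_row_uniq i j j' : A i j -> A i j' -> j = j'.
Proof.
case/and3P: SpermA => /forallP/(_ i)/cards1P[j0 Hj0] _ _ Aij Aij'.
have : j \in [set j | A i j] by rewrite inE.
have : j' \in [set j | A i j] by rewrite inE.
by rewrite Hj0 !inE => /eqP-> /eqP->.
Qed.

Lemma Sperm_col_uniq i i' j : A i j -> A i' j -> i = i'.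
Proof.
case/and3P: SpermA => _ /forallP/(_ j)/cards1P[i0 Hi0] _ Aij Ai'j.
have : i \in [set i | A i j] by rewrite inE.
have : i' \in [set i | A i j] by rewrite inE.
by rewrite Hi0 !inE => /eqP-> /eqP->.
Qed.

Lemma Sperm_block_uniq i j i' j' : A i j -> A i' j' ->
  ord_hi i = ord_hi i' -> ord_hi j = ord_hi j' -> (i, j) = (i', j').
Proof.
case/and3P: SpermA => _ _ /forallP/(_ (ord_hi i))/forallP/(_ (ord_hi j))/cards1P[ij0 H0].
move=> Aij Aij' hi hj.
have : (i, j) \in [set ij0] by rewrite -H0 inE /= !eqxx.
have : (i', j') \in [set ij0].
  rewrite -H0 inE /= -[i' %/ n]/(val (ord_hi i')) -[j' %/ n]/(val (ord_hi j')).
  by rewrite -hi -hj !eqxx.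
by rewrite !inE => /eqP-> /eqP->.
Qed.

Definition Sperm_pos (p q : 'I_n) : 'I_(n ^ 2) * 'I_(n ^ 2) :=
  odflt (ord_hilo p p, ord_hilo q q)
    [pick ij | [&& ord_hi ij.1 == p, ord_hi ij.2 == q & A ij.1 ij.2]].

Lemma Sperm_posP p q :
  [/\ ord_hi (Sperm_pos p q).1 = p, ord_hi (Sperm_pos p q).2 = q &
      A (Sperm_pos p q).1 (Sperm_pos p q).2].
Proof.
rewrite /Sperm_pos; case: pickP => [ij /and3P[/eqP ? /eqP ? ?] //|none].
case/and3P: SpermA => _ _ /forallP/(_ p)/forallP/(_ q)/cards1P[ij Hij].
by have := none ij; have := set11 ij; rewrite -Hij inE => ->.
Qed.

Lemma Sperm_pos_row_inj p : injective (fun q => ord_lo (Sperm_pos p q).1).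
Proof.
move=> q1 q2 /= e.
have [h1 k1 A1] := Sperm_posP p q1; have [h2 k2 A2] := Sperm_posP p q2.
have ei : (Sperm_pos p q1).1 = (Sperm_pos p q2).1.
  by rewrite -[LHS]ord_hiloK -[RHS]ord_hiloK h1 h2 e.
by rewrite ei in A1; rewrite -k1 -k2 (Sperm_row_uniq A1 A2).
Qed.

Lemma Sperm_pos_col_inj q : injective (fun p => ord_lo (Sperm_pos p q).2).
Proof.
move=> p1 p2 /= e.
have [k1 h1 A1] := Sperm_posP p1 q; have [k2 h2 A2] := Sperm_posP p2 q.
have ej : (Sperm_pos p1 q).2 = (Sperm_pos p2 q).2.
  by rewrite -[LHS]ord_hiloK -[RHS]ord_hiloK h1 h2 e.
by rewrite ej in A1; rewrite -k1 -k2 (Sperm_col_uniq A1 A2).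
Qed.

Lemma Sperm_ofP : exists x, A = Sperm_of x.
Proof.
exists ([ffun p => perm (@Sperm_pos_row_inj p)], [ffun q => perm (@Sperm_pos_col_inj q)]).
apply/matrixP => i j; rewrite Sperm_ofE /= !ffunE !permE /=.
have [hi hj Apos] := Sperm_posP (ord_hi i) (ord_hi j).
move: (Sperm_pos _ _) hi hj Apos => ij hi hj Apos.
apply/idP/andP => [Aij|[/eqP li /eqP lj]].
  by have [-> ->] := Sperm_block_uniq Apos Aij hi hj; rewrite !eqxx.
have ei : ij.1 = i by rewrite -[RHS]ord_hiloK -hi -li ord_hiloK.
have ej : ij.2 = j by rewrite -[RHS]ord_hiloK -hj -lj ord_hiloK.
by rewrite -ei -ej.
Qed.

End SpermDecoding.

Lemma disjoint_mxC m (A B : 'M[bool]_m) : disjoint_mx A B = disjoint_mx B A.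
Proof.
by apply/forallP/forallP => H i; apply/forallP => j; have /forallP/(_ j) := H i; rewrite andbC.
Qed.

Definition blocks_agree n (x y : perm_fam n * perm_fam n) (pq : 'I_n * 'I_n) :=
  (x.1 pq.1 pq.2 == y.1 pq.1 pq.2) && (x.2 pq.2 pq.1 == y.2 pq.2 pq.1).

Lemma disjoint_Sperm_of n (x y : perm_fam n * perm_fam n) :
  disjoint_mx (Sperm_of x) (Sperm_of y) = [forall pq, ~~ blocks_agree x y pq].
Proof.
apply/forallP/forallP => [H [p q]|H i].
  apply/negP => /andP[/eqP e1 /eqP e2].
  have /forallP/(_ (ord_hilo q (x.2 q p))) := H (ord_hilo p (x.1 p q)).
  by rewrite !Sperm_of_hilo e1 e2 !eqxx.
apply/forallP => j; rewrite !Sperm_ofE.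
apply/negP => /andP[/andP[/eqP a1 /eqP a2] /andP[/eqP b1 /eqP b2]].
by have := H (ord_hi i, ord_hi j); rewrite /blocks_agree /= a1 a2 b1 b2 !eqxx.
Qed.

Lemma card_unordered_pairs (T : finType) (D : {set T}) (r : rel T) :
    {in D &, symmetric r} -> {in D, forall a, ~~ r a a} ->
  (2 * #|[set [set a; b] | a in D, b in D & r a b]| =
   #|[set ab | [&& ab.1 \in D, ab.2 \in D & r ab.1 ab.2]]|)%N.
Proof.
move=> rC rI; set P := [set ab | _].
have -> : [set [set a; b] | a in D, b in D & r a b] = (fun ab => [set ab.1; ab.2]) @: P.
  apply/setP => U; apply/imset2P/imsetP => [[a b Da]|[[a b]]].
    by rewrite inE => /andP[Db rab] ->; exists (a, b); rewrite // inE /= Da Db.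
  by rewrite inE /= => /and3P[Da Db rab] ->; exists a b; rewrite // inE Db.
rewrite -[RHS]sum1_card (partition_big_imset (fun ab => [set ab.1; ab.2])) /=.
rewrite -sum1_card big_distrr /=; apply: eq_bigr => U /imsetP[[a b]].
rewrite inE /= => /and3P[Da Db rab] ->{U}; rewrite sum1dep_card muln1.
have -> : [set ab | (ab \in P) && ([set ab.1; ab.2] == [set a; b])] = [set (a, b); (b, a)].
  apply/setP => -[a' b']; rewrite !inE /=.
  apply/andP/idP => [[/and3P[Da' Db' rab'] /eqP e]|].
    have : a' \in [set a; b] by rewrite -e !inE eqxx.
    have : b' \in [set a; b] by rewrite -e !inE eqxx orbT.
    rewrite !inE => /orP[]/eqP eb /orP[]/eqP ea; subst a' b'; rewrite ?eqxx ?orbT //;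
      by rewrite (negbTE (rI _ _)) in rab'.
  by case/orP => /eqP[-> ->]; rewrite Da Db ?rab ?(rC b a) // setUC.
rewrite cards2; case: eqP => // -[eab _]; by rewrite eab (negbTE (rI b Db)) in rab.
Qed.

Lemma Sperms_image n : Sperms n = [set Sperm_of x | x in setT].
Proof.
apply/setP => A; rewrite inE; apply/idP/imsetP => [/Sperm_ofP[x ->]|[x _ ->]].
  by exists x.
exact: Sperm_of_is_Sperm.
Qed.

Lemma eta_ordered_pairs n : 0 < n ->
  2 * eta n = #|[set xy : (perm_fam n * perm_fam n) * (perm_fam n * perm_fam n) |
                  [forall pq, ~~ blocks_agree xy.1 xy.2 pq]]|.
Proof.
move=> n_gt0; rewrite /eta card_unordered_pairs; last 2 first.
- by move=> A B _ _; rewrite disjoint_mxC.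
- move=> A; rewrite Sperms_image => /imsetP[x _ ->]; rewrite disjoint_Sperm_of negb_forall.
  by apply/existsP; exists (Ordinal n_gt0, Ordinal n_gt0); rewrite negbK /blocks_agree !eqxx.
rewrite -(card_imset _ (f := fun xy => (Sperm_of xy.1, Sperm_of xy.2))); last first.
  by move=> [x y] [x' y'] /= [/Sperm_of_inj-> /Sperm_of_inj->].
apply: eq_card => -[A B]; rewrite inE /= Sperms_image.
apply/and3P/imsetP => [[/imsetP[x _ ->] /imsetP[y _ ->] dxy]|[[x y]]].
  by exists (x, y); rewrite // inE -disjoint_Sperm_of.
by rewrite inE /= -disjoint_Sperm_of => dxy [-> ->]; split; rewrite ?imset_f ?inE.
Qed.

Lemma card_perm_agree (T : finType) (t : {perm T}) (X : {set T}) :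
  #|[set s : {perm T} | [forall x in X, t x == s x]]| = (#|T| - #|X|)`!.
Proof.
have -> : [set s : {perm T} | [forall x in X, t x == s x]] =
          (fun r => r * t)%g @: [set r | perm_on (~: X) r].
  apply/setP => s; rewrite inE; apply/forall_inP/imsetP => [H|[r]].
    exists (s * t^-1)%g; last by rewrite -mulgA mulVg mulg1.
    rewrite inE; apply/subsetP => x; rewrite !inE; apply: contra => xX.
    by rewrite permM -(eqP (H x xX)) permK.
  by rewrite inE => onr -> x xX; rewrite permM (out_perm onr) // inE xX.
rewrite card_imset; last exact: mulIg.
by rewrite cardsE card_perm cardsCs setCK.
Qed.

Definition agree_weight n (S : {set 'I_n * 'I_n}) : nat :=
  (\prod_(p : 'I_n) (n - #|[set q | (p, q) \in S]|)`!) *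
  (\prod_(q : 'I_n) (n - #|[set p | (p, q) \in S]|)`!).

Lemma card_blocks_agree n (x : perm_fam n * perm_fam n) (S : {set 'I_n * 'I_n}) :
  #|[set y | [forall pq in S, blocks_agree x y pq]]| = agree_weight S.
Proof.
pose fam (t : perm_fam n) (X : 'I_n -> {set 'I_n}) :=
  setXn (fun p => [set s : {perm 'I_n} | [forall q in X p, t p q == s q]]).
have -> : [set y | [forall pq in S, blocks_agree x y pq]] =
    setX (fam x.1 (fun p => [set q | (p, q) \in S]))
         (fam x.2 (fun q => [set p | (p, q) \in S])).
  apply/setP => -[f g]; rewrite !inE.
  apply/forall_inP/andP => [H|[/forallP H1 /forallP H2] [p q] pqS].
    split; apply/forallP => p; rewrite inE; apply/forall_inP => q; rewrite inE => pqS.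
      by case/andP: (H _ pqS).
    by case/andP: (H _ pqS).
  move: (H1 p) (H2 q); rewrite !inE => /forall_inP/(_ q) h1 /forall_inP/(_ p) h2.
  by rewrite /blocks_agree h1 ?h2 ?inE.
rewrite cardsX !cardsXn /agree_weight; congr (_ * _); apply: eq_bigr => p _;
  by rewrite card_perm_agree card_ord.
Qed.

Section RowPermutationInvariants.
Variables (n : nat) (s : 'S_n) (A : 'M[bool]_n).

Lemma eps_row_perm : eps (row_perm s A) = eps A.
Proof.
rewrite /eps -[RHS](card_preimset _ (f := fun ij : 'I_n * 'I_n => (s ij.1, ij.2))).
  by apply: eq_card => ij; rewrite !inE mxE.
by move=> [a b] [c d] /= [/perm_inj-> ->].
Qed.

Lemma psi_row_perm k : psi k (row_perm s A) = psi k A.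
Proof.
have rk_perm : rk k (row_perm s A) = rk k A.
  rewrite /rk -[RHS](card_preimset _ (@perm_inj _ s)).
  by apply: eq_card => i; rewrite !inE; congr (_ == _); apply: eq_card => j; rewrite !inE mxE.
have ck_perm : ck k (row_perm s A) = ck k A.
  apply: eq_card => j; rewrite !inE; congr (_ == _).
  by rewrite -[RHS](card_preimset _ (@perm_inj _ s)); apply: eq_card => i; rewrite !inE mxE.
by rewrite /psi rk_perm ck_perm.
Qed.

End RowPermutationInvariants.

Lemma mem_cls n (A B : 'M[bool]_n) : (B \in cls A) = [exists s : 'S_n, B == row_perm s A].
Proof. by rewrite inE. Qed.

Lemma cls_refl n (A : 'M[bool]_n) : A \in cls A.
Proof. by rewrite mem_cls; apply/existsP; exists 1%g; rewrite row_perm1. Qed.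

Lemma cls_row_perm n (A : 'M[bool]_n) (s : 'S_n) : cls (row_perm s A) = cls A.
Proof.
apply/setP => C; rewrite !mem_cls; apply/existsP/existsP => [[t /eqP->]|[t /eqP->]].
  by exists (t * s)%g; rewrite row_permM.
by exists (t * s^-1)%g; rewrite -row_permM -mulgA mulVg mulg1.
Qed.

Lemma epsC_cls n (A : 'M[bool]_n) : epsC (cls A) = eps A.
Proof.
rewrite /epsC; case: pickP => [B|/(_ A)]; last by rewrite cls_refl.
by rewrite mem_cls => /existsP[s /eqP->]; rewrite eps_row_perm.
Qed.

Lemma psiC_cls n k (A : 'M[bool]_n) : psiC k (cls A) = psi k A.
Proof.
rewrite /psiC; case: pickP => [B|/(_ A)]; last by rewrite cls_refl.
by rewrite mem_cls => /existsP[s /eqP->]; rewrite psi_row_perm.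
Qed.

Lemma prod_nat_fibers (T : finType) (m : nat) (r : T -> nat) (G : nat -> nat) :
    (forall t, r t <= m) ->
  \prod_t G (r t) = \prod_(i < m.+1) G i ^ #|[set t | r t == i]|.
Proof.
move=> rm; rewrite (partition_big (fun t => inord (r t) : 'I_m.+1) predT) //=.
apply: eq_bigr => i _; rewrite (eq_bigr (fun=> G i)); last first.
  by move=> t /eqP <-; rewrite inordK // ltnS.
rewrite prod_nat_const; congr (_ ^ _); apply: eq_card => t.
by rewrite !inE unfold_in /= inordK // ltnS.
Qed.

Lemma agree_weight_ones n (A : 'M[bool]_n) : 0 < n ->
  agree_weight [set ij | A ij.1 ij.2] = \prod_(0 <= i < n.-1) (n - i)`! ^ psi i A.
Proof.
case: n A => // m A _.
have le (X : {set 'I_m.+1}) : #|X| <= m.+1.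
  by apply: leq_trans (max_card _) _; rewrite card_ord.
rewrite /agree_weight.
rewrite (prod_nat_fibers (fun k => (m.+1 - k)`!) (fun p => le [set q | (p, q) \in _])).
rewrite (prod_nat_fibers (fun k => (m.+1 - k)`!) (fun q => le [set p | (p, q) \in _])).
rewrite -big_split /= (eq_bigr (fun i : 'I_m.+2 => (m.+1 - i)`! ^ psi i A)); last first.
  move=> i _; rewrite /psi expnD; congr (_ ^ _ * _ ^ _);
    apply: eq_card => t; rewrite !inE; congr (_ == _); apply: eq_card => u; by rewrite !inE.
rewrite -(big_mkord xpredT (fun i => (m.+1 - i)`! ^ psi i A)) /=.
by rewrite 2?big_nat_recr //= subnn subSnn !exp1n !muln1.
Qed.

Lemma agree_weight0 n : agree_weight (set0 : {set 'I_n * 'I_n}) = n`! ^ n * n`! ^ n.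
Proof.
rewrite /agree_weight; congr (_ * _); rewrite -[n in _ ^ n]card_ord -prod_nat_const;
  apply: eq_bigr => p _; rewrite (_ : #|_| = 0) ?subn0 //; apply/eqP; rewrite cards_eq0;
  by apply/eqP/setP => q; rewrite !inE.
Qed.

Lemma agree_weight1 n (pq : 'I_n * 'I_n) :
  agree_weight [set pq] = ((n.-1)`! * n`! ^ n.-1) * ((n.-1)`! * n`! ^ n.-1).
Proof.
have prod_one (k0 l0 : 'I_n) (X : 'I_n -> {set 'I_n}) :
    (forall k, X k = if k == k0 then [set l0] else set0) ->
    \prod_(k : 'I_n) (n - #|X k|)`! = (n.-1)`! * n`! ^ n.-1.
  move=> XE; rewrite (bigD1 k0) //= XE eqxx cards1 subn1; congr (_ * _).
  rewrite (eq_bigr (fun=> n`!)); last by move=> k /negbTE kk; rewrite XE kk cards0 subn0.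
  by rewrite prod_nat_const cardC1 card_ord.
case: pq => p0 q0; rewrite /agree_weight (prod_one p0 q0) ?(prod_one q0 p0) // => k;
  apply/setP => l; rewrite !inE xpair_eqE;
  by case: (k == _); rewrite ?andbF ?andbT ?inE // andbC.
Qed.

Local Open Scope ring_scope.

Lemma card_inclusion_exclusion (T K : finType) (a : T -> K -> bool) :
  #|[set y | [forall k, ~~ a y k]]|%:Z =
  \sum_(S : {set K}) (-1) ^+ #|S| * #|[set y | [forall k in S, a y k]]|%:Z.
Proof.
have card_sum (P : pred T) : #|[set y | P y]|%:Z = \sum_y (P y : nat)%:Z.
  by rewrite -sum1dep_card big_mkcond -natz natr_sum; apply: eq_bigr => y _; case: (P y).
have prod_bool (P : pred K) (b : K -> bool) :
    \prod_(k in P) (b k : nat)%:Z = ([forall k in P, b k] : nat)%:Z.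
  case: (boolP [forall k in P, b k]) => [/forall_inP H|]; first by rewrite big1 // => k /H ->.
  rewrite negb_forall_in => /existsP[k /andP[Pk /negbTE bk]].
  by rewrite (bigD1 k) //= bk mul0r.
have expand y : ([forall k, ~~ a y k] : nat)%:Z =
    \sum_(S : {set K}) \prod_k (if k \in S then - (a y k : nat)%:Z else 1).
  rewrite -(prod_bool predT) -bigA_distr; apply: eq_bigr => k _; by case: (a y k).
rewrite card_sum (eq_bigr _ (fun y _ => expand y)) exchange_big /=.
apply: eq_bigr => S _; rewrite card_sum mulr_sumr.
by apply: eq_bigr => y _; rewrite -big_mkcond /= prodrN prod_bool.
Qed.

Definition xi_sets n : int :=
  \sum_(S : {set 'I_n * 'I_n}) (-1) ^+ #|S| * (agree_weight S)%:Z.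

Lemma card_disjoint_pairs n :
  #|[set xy : (perm_fam n * perm_fam n) * (perm_fam n * perm_fam n) |
      [forall pq, ~~ blocks_agree xy.1 xy.2 pq]]|%:Z =
  (n`! ^ (2 * n))%N%:Z * xi_sets n.
Proof.
have fiber (x : perm_fam n * perm_fam n) :
    #|[set y | [forall pq, ~~ blocks_agree x y pq]]|%:Z = xi_sets n.
  rewrite card_inclusion_exclusion /xi_sets; apply: eq_bigr => S _.
  by rewrite card_blocks_agree.
rewrite -(sum1dep_card (fun xy => [forall pq, ~~ blocks_agree xy.1 xy.2 pq])) big_mkcond.
rewrite -(pair_bigA _ (fun x y => if [forall pq, ~~ blocks_agree x y pq] then 1 else 0)%N) /=.
rewrite -natz natr_sum (eq_bigr (fun=> xi_sets n)); last first.
  by move=> x _; rewrite -big_mkcond sum1dep_card natz; apply: fiber.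
rewrite sumr_const -mulr_natl natz; congr (Posz _ * _).
by rewrite card_prod card_ffun card_Sn card_ord -expnD addnn mul2n.
Qed.

Definition xi_term n (A : 'M[bool]_n) : int :=
  (-1) ^+ eps A * \prod_(0 <= i < n.-1) (((n - i)`! ^ psi i A)%N)%:Z.

Lemma xi_term_row_perm n (s : 'S_n) (A : 'M[bool]_n) : xi_term (row_perm s A) = xi_term A.
Proof.
by rewrite /xi_term eps_row_perm; congr (_ * _); apply: eq_bigr => i _; rewrite psi_row_perm.
Qed.

Lemma xi_sum_matrices n : xi n = \sum_(A : 'M[bool]_n | (2 <= eps A)%N) xi_term A.
Proof.
rewrite (eq_bigl (fun A => A \in [set A : 'M[bool]_n | (2 <= eps A)%N])); last first.
  by move=> A; rewrite inE.
rewrite (partition_big_imset (@cls n)) /xi /=.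
apply: eq_big => [C|_ /andP[/imsetP[A _ ->] eA]].
  apply/andP/imsetP => [[/imsetP[A _ ->]]|[A]]; rewrite ?inE => eA.
    by rewrite epsC_cls in eA; exists A; rewrite ?inE.
  by move=> ->; rewrite imset_f ?epsC_cls.
rewrite (eq_bigl (fun B => B \in cls A)); last first.
  move=> B; rewrite inE; apply/andP/idP => [[_ /eqP <-]|BA]; first exact: cls_refl.
  move: BA; rewrite mem_cls => /existsP[s /eqP->].
  by rewrite cls_row_perm eps_row_perm -epsC_cls eqxx.
rewrite [RHS](eq_bigr (fun=> xi_term A)); last first.
  by move=> B; rewrite mem_cls => /existsP[s /eqP->]; rewrite xi_term_row_perm.
rewrite sumr_const /xi_term epsC_cls -mulr_natl natz [_ * #|_|%:Z]mulrC -mulrA.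
by congr (_ * (_ * _)); apply: eq_bigr => i _; rewrite psiC_cls.
Qed.

Lemma xi_sets_small n : (0 < n)%N ->
  \sum_(S : {set 'I_n * 'I_n} | (#|S| < 2)%N) (-1) ^+ #|S| * (agree_weight S)%:Z = 0.
Proof.
move=> n_gt0; rewrite (bigID (fun S : {set 'I_n * 'I_n} => #|S| == 0%N)) /=.
rewrite (eq_bigl (fun S => S == set0)); last first.
  by move=> S; rewrite cards_eq0 andb_idl // => /eqP->; rewrite cards0.
rewrite big_pred1_eq cards0 expr0 mul1r agree_weight0.
rewrite (eq_bigl (fun S : {set 'I_n * 'I_n} => #|S| == 1%N)); last first.
  by move=> S; case: #|S| => [|[|k]].
set w1 := ((n.-1)`! * n`! ^ n.-1 * ((n.-1)`! * n`! ^ n.-1))%N.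
have w0E : (n`! ^ n * n`! ^ n = w1 * (n * n))%N.
  by rewrite /w1; case: (n) n_gt0 => // m _; rewrite /= factS expnS; ring.
rewrite big_cards1 (eq_bigr (fun=> - w1%:Z)).
  by rewrite sumr_const card_prod card_ord w0E mulNrn -mulr_natr natz PoszM subrr.
by move=> pq _; rewrite cards1 agree_weight1 expr1 mulN1r.
Qed.

Lemma xi_setsE n : (0 < n)%N -> xi_sets n = xi n.
Proof.
move=> n_gt0; rewrite /xi_sets (bigID (fun S : {set 'I_n * 'I_n} => (#|S| < 2)%N)) /=.
rewrite xi_sets_small // add0r xi_sum_matrices.
rewrite (reindex (fun A : 'M[bool]_n => [set ij | A ij.1 ij.2])) /=; last first.
  exists (fun S : {set 'I_n * 'I_n} => \matrix_(i, j) ((i, j) \in S)) => [A _|S _].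
    by apply/matrixP => i j; rewrite mxE inE.
  by apply/setP => -[i j]; rewrite !inE mxE.
apply: eq_big => [A|A _]; first by rewrite -leqNgt.
rewrite agree_weight_ones // -natz natr_prod; congr (_ * _).
by apply: eq_bigr => i _; rewrite natz.
Qed.

Theorem mainTheorem6 (n : nat) (hn : (2 <= n)%N) :
  (eta n)%:Q = ((n`! ^ (2 * n))%N)%:Q / 2 * (xi n)%:~R.
Proof.
have n_gt0 : (0 < n)%N by apply: leq_trans hn.
have two_eta : (2 * eta n)%N%:Z = (n`! ^ (2 * n))%N%:Z * xi n.
  by rewrite eta_ordered_pairs // card_disjoint_pairs xi_setsE.
have := congr1 (fun z : int => z%:~R : rat) two_eta; rewrite /= PoszM !intrM => {}two_eta.
by rewrite mulrAC -two_eta mulrC mulKf.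
Qed.
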